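(* In $\mathcal{K}(m)$ (for $m$ large enough that all indices occur) the following equations hold: \begin{align*} 9z(3,\{1,2,3\})&=z(2,\{1,2\})z(2,\{3\})-z(2,\{1,3\})z(2,\{2\})+z(2,\{2,3\})z(2,\{1\})\\ &\quad+z(1,\{1,2\})z(3,\{3\})-z(1,\{1,3\})z(3,\{2\})+z(1,\{2,3\})z(3,\{1\}),\\ 9z(5,\{1,2,3\})&=z(4,\{1,2\})z(2,\{3\})-z(4,\{1,3\})z(2,\{2\})+z(4,\{2,3\})z(2,\{1\})\\ &\quad+z(3,\{1,2\})z(3,\{3\})-z(3,\{1,3\})z(3,\{2\})+z(3,\{2,3\})z(3,\{1\}),\\ 3z(4,\{1,2\})&=z(3,\{1\})z(2,\{2\})+z(2,\{1\})z(3,\{2\}),\\ 3z(6,\{1,2\})&=z(5,\{1\})z(2,\{2\})+z(4,\{1\})z(3,\{2\}),\\ z(6,\emptyset)&=0. \end{align*}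
   Context: $\mathcal{K}(m)=\mathbb{Q}[x,y,w]/(x+y+w,x^2+y^2+w^2,x^6+y^6+w^6)\otimes\bigotimes_{j=1}^m\Lambda(\alpha_j,\beta_j,\gamma_j)/(\alpha_j+\beta_j+\gamma_j)$, a graded-commutative algebra with $|x|=|y|=|w|=2$ and $|\alpha_j|=|\beta_j|=|\gamma_j|=1$. For $I=\{i_1<\dots<i_k\}\subset\{1,\dots,m\}$, $\alpha_I=\alpha_{i_1}\cdots\alpha_{i_k}$ ($\alpha_\emptyset=1$), similarly $\beta_I,\gamma_I$; for $d\ge0$, $z(d+1,I)=x^d\alpha_I+y^d\beta_I+w^d\gamma_I$. *)

From HB Require Import structures.
From mathcomp Require Import all_boot all_order all_algebra.
From mathcomp Require Import mpoly.
Set Implicit Arguments. Unset Strict Implicit. Unset Printing Implicit Defensive.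
Import Order.TTheory GRing.Theory Num.Theory.
Local Open Scope ring_scope.

(* Odd generators of the free graded-commutative algebra: for j : 'I_m,
   (j,0) = alpha_(j+1), (j,1) = beta_(j+1), (j,2) = gamma_(j+1). *)
Definition OddGen (m : nat) := ('I_m * 'I_3)%type.

(* total order on odd generators used for the exterior sign convention *)
Definition code (m : nat) (p : OddGen m) : nat := (3 * p.1 + p.2)%N.

(* The free graded-commutative Q-algebra  Q[x,y,w] (x) Lambda(alpha_j,beta_j,gamma_j)
   as a vector space: the coefficient (in Q[x,y,w]) of each exterior monomial e_S,
   S a set of odd generators (e_S = product of its elements in increasing code order). *)
Definition GC (m : nat) := {ffun {set OddGen m} -> {mpoly rat[3]}}.

(* sign of e_A * e_B = sign * e_(A u B) for disjoint A, B *)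
Definition esign (m : nat) (A B : {set OddGen m}) : {mpoly rat[3]} :=
  (-1) ^+ #|[set ab : OddGen m * OddGen m |
              [&& ab.1 \in A, ab.2 \in B & (code ab.2 < code ab.1)%N]]|.

Definition gmul (m : nat) (f g : GC m) : GC m :=
  [ffun S => \sum_(A : {set OddGen m}) \sum_(B : {set OddGen m} |
        (A :&: B == set0) && (A :|: B == S)) esign A B * (f A * g B)].

Definition ev (m : nat) (p : {mpoly rat[3]}) : GC m :=
  [ffun S => if S == set0 then p else 0].

Definition gone (m : nat) : GC m := ev m 1.

Definition odd_gen (m : nat) (p : OddGen m) : GC m :=
  [ffun S => if S == [set p] then 1 else 0].

Definition xv : {mpoly rat[3]} := 'X_(0 : 'I_3).
Definition yv : {mpoly rat[3]} := 'X_(1 : 'I_3).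
Definition wv : {mpoly rat[3]} := 'X_(2 : 'I_3).

Definition alpha (m : nat) (j : 'I_m) : GC m := odd_gen (j, 0 : 'I_3).
Definition beta  (m : nat) (j : 'I_m) : GC m := odd_gen (j, 1 : 'I_3).
Definition gamma (m : nat) (j : 'I_m) : GC m := odd_gen (j, 2 : 'I_3).

(* alpha_I = alpha_(i1) ... alpha_(ik) for I = {i1 < ... < ik}; alpha_emptyset = 1
   (enum I lists I in increasing order) *)
Definition prodI (m : nat) (g : 'I_m -> GC m) (I : {set 'I_m}) : GC m :=
  foldr (@gmul m) (gone m) (map g (enum I)).

Definition z (m : nat) (k : nat) (I : {set 'I_m}) : GC m :=
  gmul (ev m (xv ^+ k.-1)) (prodI (@alpha m) I)
  + gmul (ev m (yv ^+ k.-1)) (prodI (@beta m) I)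
  + gmul (ev m (wv ^+ k.-1)) (prodI (@gamma m) I).

Definition rel1 : {mpoly rat[3]} := xv + yv + wv.
Definition rel2 : {mpoly rat[3]} := xv ^+ 2 + yv ^+ 2 + wv ^+ 2.
Definition rel6 : {mpoly rat[3]} := xv ^+ 6 + yv ^+ 6 + wv ^+ 6.
Definition ell (m : nat) (j : 'I_m) : GC m := alpha j + beta j + gamma j.

(* Equality in K(m): u - v lies in the ideal generated by x+y+w, x^2+y^2+w^2,
   x^6+y^6+w^6 and alpha_j+beta_j+gamma_j.  (The generators are homogeneous in a
   graded-commutative algebra, so the left ideal they generate is two-sided.) *)
Definition Keq (m : nat) (u v : GC m) : Prop :=
  exists (a b c : GC m) (d : {ffun 'I_m -> GC m}),
    u - v = gmul (ev m rel1) a + gmul (ev m rel2) b + gmul (ev m rel6) c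
            + \sum_(j : 'I_m) gmul (ell j) (d j).

(* 1-based index sets: idx m s = { i in {1..m} | i in s } as a subset of 'I_m *)
Definition idx (m : nat) (s : seq nat) : {set 'I_m} :=
  [set i : 'I_m | (val i).+1 \in s].

(* An exterior monomial in the alpha_j, beta_j, gamma_j with indices j in A is a colouring
   of A by x, y, w, and the graded product of two such monomials on disjoint index sets is
   the monomial of the glued colouring times the shuffle sign.  So every product of
   z(k, I)'s over disjoint I's is a sum over colourings with polynomial coefficients, and
   each relation reduces, colouring by colouring, to a polynomial identity modulo
   e1 = x + y + w and e2 = xy + yw + wx = (e1^2 - (x^2 + y^2 + w^2)) / 2, up to multiples of
   alpha_j + beta_j + gamma_j, which absorb exactly the coefficients not depending on the
   colour of j.  The identities used are t^2 + ts + s^2 = e1 (t + s) - e2 and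
   t^3 - e3 = e1 t^2 - e2 t for distinct variables t, s; they survive multiplication by any
   power of t, so the relations hold for every shift of the exponents, two of which are
   stated.  The last relation is Newton's identity for x^5 + y^5 + w^5. *)

From HB Require Import structures.
From mathcomp Require Import all_boot all_order all_algebra.
From mathcomp Require Import mpoly.
From mathcomp Require Import ring zify.
Set Implicit Arguments.
Unset Strict Implicit.
Unset Printing Implicit Defensive.

Import GRing.Theory.
Local Open Scope ring_scope.

Local Notation P := {mpoly rat[3]}.

Section Kalgebra.
Variable m : nat.
Implicit Types (u v w : GC m) (p q : P) (S T : {set OddGen m}).

Lemma gmulDl u v w : gmul (u + v) w = gmul u w + gmul v w.
Proof.
apply/ffunP => S; rewrite !ffunE -big_split; apply: eq_bigr => A _.
by rewrite -big_split; apply: eq_bigr => B _; rewrite ffunE mulrDl mulrDr.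
Qed.

Lemma gmulDr u v w : gmul u (v + w) = gmul u v + gmul u w.
Proof.
apply/ffunP => S; rewrite !ffunE -big_split; apply: eq_bigr => A _.
by rewrite -big_split; apply: eq_bigr => B _; rewrite ffunE mulrDr mulrDr.
Qed.

Lemma gmul0l v : gmul 0 v = 0.
Proof. by apply: (addrI (gmul 0 v)); rewrite -gmulDl !addr0. Qed.

Lemma gmul0r v : gmul v 0 = 0.
Proof. by apply: (addrI (gmul v 0)); rewrite -gmulDr !addr0. Qed.

Lemma gmulNr u v : gmul u (- v) = - gmul u v.
Proof. by apply/eqP; rewrite -subr_eq0 opprK -gmulDr addNr gmul0r. Qed.

Lemma gmul_suml I (r : seq I) (Q : pred I) (F : I -> GC m) v :
  gmul (\sum_(i <- r | Q i) F i) v = \sum_(i <- r | Q i) gmul (F i) v.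
Proof. exact: (big_morph (fun u => gmul u v) (fun u w => gmulDl u w v) (gmul0l v)). Qed.

Lemma gmul_sumr I (r : seq I) (Q : pred I) (F : I -> GC m) v :
  gmul v (\sum_(i <- r | Q i) F i) = \sum_(i <- r | Q i) gmul v (F i).
Proof. exact: (big_morph (gmul v) (gmulDr v) (gmul0r v)). Qed.

Lemma esign0l S : esign set0 S = 1.
Proof.
rewrite /esign (_ : [set _ | _] = set0) ?cards0 //.
by apply/setP => -[a b]; rewrite !inE.
Qed.

Lemma gmul_ev p v : gmul (ev m p) v = [ffun S => p * v S].
Proof.
apply/ffunP => S; rewrite !ffunE (bigD1 set0) //= [X in _ + X]big1 ?addr0; last first.
  by move=> A /negbTE nA; apply: big1 => B _; rewrite ffunE nA mul0r mulr0.
rewrite (bigD1 S) ?set0I ?set0U ?eqxx //= [X in _ + X]big1 ?addr0; last first.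
  by move=> B /andP[/andP[_]]; rewrite set0U => /eqP ->; rewrite eqxx.
by rewrite esign0l ffunE eqxx mul1r.
Qed.

Lemma gmul_evM p q v : gmul (ev m p) (gmul (ev m q) v) = gmul (ev m (p * q)) v.
Proof. by apply/ffunP => S; rewrite !gmul_ev !ffunE mulrA. Qed.

Definition monom S p : GC m := [ffun T => if T == S then p else 0].

Lemma monom0 S : monom S 0 = 0.
Proof. by apply/ffunP => T; rewrite !ffunE if_same. Qed.

Lemma monomD S p q : monom S (p + q) = monom S p + monom S q.
Proof. by apply/ffunP => T; rewrite !ffunE; case: ifP; rewrite ?addr0. Qed.

Lemma monomN S p : monom S (- p) = - monom S p.
Proof. by apply/ffunP => T; rewrite !ffunE; case: ifP; rewrite ?oppr0. Qed.

Lemma monomMn S p n : monom S (p *+ n) = monom S p *+ n.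
Proof. by elim: n => [|n IH]; rewrite ?monom0 // !mulrS monomD IH. Qed.

Lemma gmul_ev_monom p S q : gmul (ev m p) (monom S q) = monom S (p * q).
Proof. by apply/ffunP => T; rewrite gmul_ev !ffunE; case: ifP; rewrite ?mulr0. Qed.

Lemma gmul_monom S T p q : S :&: T = set0 ->
  gmul (monom S p) (monom T q) = monom (S :|: T) (esign S T * (p * q)).
Proof.
move=> STI; apply/ffunP => U; rewrite !ffunE (bigD1 S) //= [X in _ + X]big1 ?addr0; last first.
  by move=> A /negbTE nA; apply: big1 => B _; rewrite ffunE nA mul0r mulr0.
under eq_bigr => B _ do rewrite ffunE eqxx.
case: (eqVneq (S :|: T) U) => [<-|nU].
  rewrite (bigD1 T) ?STI ?eqxx //= [X in _ + X]big1 ?addr0 ?ffunE ?eqxx //.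
  by move=> B /andP[_ /negbTE nB]; rewrite ffunE nB !mulr0.
rewrite big1 // => B /andP[_ /eqP SB]; rewrite ffunE.
case: eqP => [TB|_]; last by rewrite !mulr0.
by rewrite -TB SB eqxx in nU.
Qed.

Definition coloring := {ffun 'I_m -> 'I_3}.

Implicit Types (A B : {set 'I_m}) (f g h : coloring) (F G : coloring -> P).

Definition graph_on A f : {set OddGen m} := [set ic | (ic.1 \in A) && (ic.2 == f ic.1)].
Definition restrict A f : coloring := [ffun i => if i \in A then f i else 0].
Definition glue A f g : coloring := [ffun i => if i \in A then f i else g i].
Definition normalized A f := restrict A f == f.
Definition agree_on A f g := A \subset [set i | f i == g i].

Definition isgn A B : P :=
  (-1) ^+ #|[set ij : 'I_m * 'I_m | [&& ij.1 \in A, ij.2 \in B & (ij.2 < ij.1)%N]]|.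

(* [colored A F] sums [F f] times the monomial taking at each i in A the generator of
   colour [f i]; colourings are normalized to 0 off A so that each monomial occurs once. *)
Definition colored A F : GC m :=
  \sum_(f | normalized A f) monom (graph_on A f) (F f).

Lemma isgn_lt A B : {in A & B, forall a b : 'I_m, (a < b)%N} -> isgn A B = 1.
Proof.
move=> AB; rewrite /isgn (_ : [set _ | _] = set0) ?cards0 //.
apply/setP => -[a b]; rewrite !inE /=.
by apply/and3P => -[aA bB]; rewrite ltnNge ltnW ?AB.
Qed.

Lemma isgn1 a b : isgn [set a] [set b] = if (b < a)%N then -1 else 1.
Proof.
rewrite /isgn; set S := [set _ | _]; case: ifP => ba.
  rewrite (_ : S = [set (a, b)]) ?cards1 //.
  by apply/setP => -[x y]; rewrite !inE /= xpair_eqE; do 2!case: eqP => [->|] //=.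
rewrite (_ : S = set0) ?cards0 //.
by apply/setP => -[x y]; rewrite !inE /=; do 2!case: eqP => [->|] //=.
Qed.

Lemma isgnUl A1 A2 B : [disjoint A1 & A2] ->
  isgn (A1 :|: A2) B = isgn A1 B * isgn A2 B.
Proof.
move=> A12; rewrite /isgn -exprD -cardsUI (_ : _ :&: _ = set0) ?cards0 ?addn0.
  by congr (_ ^+ _); apply: eq_card => -[x y]; rewrite !inE /= -andb_orl.
apply/setP => -[x y]; rewrite !inE /=.
by case x1: (x \in A1); rewrite //= (disjointFr A12 x1) andbF.
Qed.

Lemma isgnUr A B1 B2 : [disjoint B1 & B2] ->
  isgn A (B1 :|: B2) = isgn A B1 * isgn A B2.
Proof.
move=> B12; rewrite /isgn -exprD -cardsUI (_ : _ :&: _ = set0) ?cards0 ?addn0.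
  congr (_ ^+ _); apply: eq_card => -[x y]; rewrite !inE /=.
  by case: (x \in A); case: (y \in B1); case: (y \in B2); rewrite /= ?orbb ?orbF.
apply/setP => -[x y]; rewrite !inE /=.
by case: (x \in A); case y1: (y \in B1); rewrite //= (disjointFr B12 y1) ?andbF.
Qed.

Lemma isgn1_lt (a b : 'I_m) : (a < b)%N -> isgn [set a] [set b] = 1.
Proof. by move=> ab; rewrite isgn1 ltnNge ltnW. Qed.

Lemma isgn1_gt (a b : 'I_m) : (b < a)%N -> isgn [set a] [set b] = -1.
Proof. by move=> ba; rewrite isgn1 ba. Qed.

Lemma graph_onI A B f g : [disjoint A & B] -> graph_on A f :&: graph_on B g = set0.
Proof.
move=> AB; apply/setP => -[i c]; rewrite !inE /=.
by case iA: (i \in A); rewrite //= (disjointFr AB iA) andbF.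
Qed.

Lemma graph_onU A B f g : [disjoint A & B] ->
  graph_on A f :|: graph_on B g = graph_on (A :|: B) (glue A f g).
Proof.
move=> AB; apply/setP => -[i c]; rewrite !inE /= ffunE.
by case iA: (i \in A); rewrite //= (disjointFr AB iA) andFb orbF.
Qed.

Lemma esign_graph_on A B f g : [disjoint A & B] ->
  esign (graph_on A f) (graph_on B g) = isgn A B.
Proof.
move=> AB; rewrite /esign /isgn; congr (_ ^+ _).
set inv := [set ij : 'I_m * 'I_m | _].
rewrite (_ : [set _ | _] = [set ((ij.1, f ij.1), (ij.2, g ij.2)) | ij in inv]).
  by rewrite card_imset // => -[a b] [a' b'] /= [-> _ -> _].
apply/setP => -[[a c] [b d]]; rewrite !inE /=; apply/idP/imsetP.
  case/and3P => /andP[aA /eqP ->] /andP[bB /eqP ->] lt.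
  exists (a, b) => //; rewrite inE /= aA bB /=.
  (* [code] orders odd generators by index first. *)
  have ab : a != b by apply: contraTneq bB => <-; rewrite (disjointFr AB aA).
  move: lt; rewrite /code /=; have := ltn_ord (f a); have := ltn_ord (g b).
  move: ab; rewrite -val_eqE /=; lia.
case=> -[a' b']; rewrite inE /= => /and3P[aA bB lt] [-> -> -> ->].
rewrite aA bB !eqxx /= /code /=; have := ltn_ord (f a'); have := ltn_ord (g b').
move: lt; lia.
Qed.

Lemma gmul_graph_on A B f g p q : [disjoint A & B] ->
  gmul (monom (graph_on A f) p) (monom (graph_on B g) q) =
  monom (graph_on (A :|: B) (glue A f g)) (isgn A B * (p * q)).
Proof.
by move=> AB; rewrite gmul_monom ?graph_onI ?graph_onU ?esign_graph_on.
Qed.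

Lemma restrict_gluel A f g : restrict A (glue A f g) = restrict A f.
Proof. by apply/ffunP => i; rewrite !ffunE; case: (i \in A). Qed.

Lemma restrict_gluer A B f g : [disjoint A & B] ->
  restrict B (glue A f g) = restrict B g.
Proof.
move=> AB; apply/ffunP => i; rewrite !ffunE; case: ifP => // iB.
by rewrite (disjointFl AB iB).
Qed.

Lemma restrict_id A f : restrict A (restrict A f) = restrict A f.
Proof. by apply/ffunP => i; rewrite !ffunE; case: (i \in A). Qed.

Lemma glue_restrict A B h : normalized (A :|: B) h ->
  glue A (restrict A h) (restrict B h) = h.
Proof.
move=> /eqP nh; apply/ffunP => i; rewrite !ffunE.
case iA: (i \in A) => //; rewrite -{2}nh ffunE inE iA.
by case: (i \in B).
Qed.

Lemma normalized_glue A B f g : normalized A f -> normalized B g ->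
  normalized (A :|: B) (glue A f g).
Proof.
move=> /eqP nf /eqP ng; apply/eqP/ffunP => i; rewrite !ffunE inE.
case iA: (i \in A) => //=; case iB: (i \in B) => //=.
by rewrite -ng ffunE iB.
Qed.

Lemma gmul_colored A B F G : [disjoint A & B] ->
  gmul (colored A F) (colored B G) =
  colored (A :|: B) (fun h => isgn A B * (F (restrict A h) * G (restrict B h))).
Proof.
move=> AB; rewrite /colored gmul_suml.
under eq_bigr => f _ do rewrite gmul_sumr.
under eq_bigr => f _ do under eq_bigr => g _ do rewrite gmul_graph_on //.
rewrite pair_big_dep /= [RHS](reindex_onto (fun fg : coloring * coloring => glue A fg.1 fg.2)
                (fun h => (restrict A h, restrict B h))) /=; last first.
  by move=> h nh; rewrite glue_restrict.
apply: eq_big => [[f g]|[f g] /andP[/eqP nf /eqP ng]] /=.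
  apply/andP/andP => [[nf ng]|[_ /eqP [ef eg]]].
    rewrite normalized_glue // restrict_gluel restrict_gluer //.
    by rewrite (eqP nf) (eqP ng).
  by rewrite /normalized -ef -eg restrict_gluel restrict_gluer // !restrict_id.
by rewrite restrict_gluel restrict_gluer // nf ng.
Qed.

Lemma graph_on_restrict A f : graph_on A (restrict A f) = graph_on A f.
Proof. by apply/setP => -[i c]; rewrite !inE ffunE /=; case: (i \in A). Qed.

Lemma restrict_agree A f g : agree_on A f g -> restrict A f = restrict A g.
Proof.
move/subsetP => fg; apply/ffunP => i; rewrite !ffunE.
by case: ifP => // /fg; rewrite inE => /eqP.
Qed.

Lemma monom_graph_on A g p :
  monom (graph_on A g) p = colored A (fun f => if agree_on A f g then p else 0).
Proof.
have agree_g : agree_on A (restrict A g) g.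
  by apply/subsetP => i iA; rewrite inE ffunE iA.
rewrite /colored (bigD1 (restrict A g)) /=; last by rewrite /normalized restrict_id.
rewrite graph_on_restrict agree_g big1 ?addr0 // => f /andP[/eqP nf nfg].
case: ifP => [/restrict_agree fg|_]; last by rewrite monom0.
by rewrite -nf fg eqxx in nfg.
Qed.

Lemma eq_colored A F G : (forall f, normalized A f -> F f = G f) ->
  colored A F = colored A G.
Proof. by move=> FG; apply: eq_bigr => f nf; rewrite FG. Qed.

Lemma coloredD A F G : colored A F + colored A G = colored A (fun f => F f + G f).
Proof. by rewrite /colored -big_split; apply: eq_bigr => f _; rewrite monomD. Qed.

Lemma coloredN A F : - colored A F = colored A (fun f => - F f).
Proof. by rewrite /colored -sumrN; apply: eq_bigr => f _; rewrite monomN. Qed.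

Lemma coloredMn A F n : colored A F *+ n = colored A (fun f => F f *+ n).
Proof. by rewrite /colored -sumrMnl; apply: eq_bigr => f _; rewrite monomMn. Qed.

Lemma gmul_ev_colored p A F : gmul (ev m p) (colored A F) = colored A (fun f => p * F f).
Proof. by rewrite gmul_sumr; apply: eq_bigr => f _; rewrite gmul_ev_monom. Qed.

Lemma sum_ord3 (V : nmodType) (F : 'I_3 -> V) : \sum_(c < 3) F c = F 0 + F 1 + F 2.
Proof.
by rewrite !big_ord_recr big_ord0 /= add0r; congr (F _ + F _ + F _); apply: val_inj.
Qed.

Definition var (c : 'I_3) : P := [:: xv; yv; wv]`_c.

Definition zcoef k A f : P :=
  \sum_(c < 3) if agree_on A f [ffun=> c] then var c ^+ k.-1 else 0.

Lemma agree_on1 j f g : agree_on [set j] f g = (f j == g j).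
Proof. by rewrite /agree_on sub1set inE. Qed.

Lemma agree_onU A B f g : agree_on (A :|: B) f g = agree_on A f g && agree_on B f g.
Proof. exact: subUset. Qed.

Lemma agree_on_restrict A f g : agree_on A (restrict A f) g = agree_on A f g.
Proof.
apply/subsetP/subsetP => fg i iA; have := fg i iA; rewrite !inE ffunE iA //.
Qed.

Lemma zcoef_restrict k A f : zcoef k A (restrict A f) = zcoef k A f.
Proof. by apply: eq_bigr => c _; rewrite agree_on_restrict. Qed.

Lemma glue_id A f : glue A f f = f.
Proof. by apply/ffunP => i; rewrite ffunE if_same. Qed.

Lemma graph_on1 j c : graph_on [set j] [ffun=> c] = [set (j, c)].
Proof.
by apply/setP => -[i d]; rewrite !inE ffunE /= xpair_eqE; case: eqP => // ->.
Qed.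

Lemma odd_gen_graph_on j c : odd_gen (j, c) = monom (graph_on [set j] [ffun=> c]) 1.
Proof. by rewrite graph_on1. Qed.

Lemma foldr_odd_gen c (s : seq 'I_m) : sorted ltn (map val s) ->
  foldr (@gmul m) (gone m) (map (fun j => odd_gen (j, c)) s) =
  monom (graph_on [set i in s] [ffun=> c]) 1.
Proof.
elim: s => [_|a s IH /= as_sorted].
  by rewrite (_ : graph_on _ _ = set0) //; apply/setP => -[i d]; rewrite !inE.
have a_min : all (ltn a) (map val s) := order_path_min ltn_trans as_sorted.
have a_lt i : i \in s -> (a < i)%N.
  by move=> si; apply: (allP a_min); rewrite map_f.
rewrite IH ?(path_sorted as_sorted) // odd_gen_graph_on gmul_graph_on; last first.
  by rewrite disjoints1 inE; apply: contraTN isT => /a_lt; rewrite ltnn.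
rewrite glue_id isgn_lt ?mulr1; last by move=> i j; rewrite !inE => /eqP -> /a_lt.
by congr (monom (graph_on _ _) _); apply/setP => i; rewrite !inE.
Qed.

Lemma prodI_graph_on c I :
  prodI (fun j => odd_gen (j, c)) I = monom (graph_on I [ffun=> c]) 1.
Proof.
rewrite /prodI foldr_odd_gen ?set_enum //.
rewrite -[enum _](eq_filter (mem_enum _)) -(eq_filter (mem_map val_inj _)) -filter_map.
by rewrite (sorted_filter ltn_trans) // unlock val_ord_enum iota_ltn_sorted.
Qed.

Lemma z_colored k A : z k A = colored A (zcoef k A).
Proof.
rewrite /z (prodI_graph_on 0) (prodI_graph_on 1) (prodI_graph_on 2).
rewrite !gmul_ev_monom !mulr1 !monom_graph_on !coloredD.
by apply: eq_colored => f _; rewrite /zcoef sum_ord3.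
Qed.

Lemma ell_colored j : ell j = colored [set j] (fun=> 1).
Proof.
rewrite /ell /alpha /beta /gamma !odd_gen_graph_on !monom_graph_on !coloredD.
apply: eq_colored => f _; rewrite !agree_on1 !ffunE.
by case: (f j) => -[|[|[|//]]] ?; rewrite /= ?addr0 ?add0r.
Qed.

Definition e2 : P := xv * yv + yv * wv + wv * xv.
Definition e3 : P := xv * yv * wv.

Lemma e2_rel : e2 = (2^-1 : rat)%:MP * (rel1 ^+ 2 - rel2).
Proof.
pose h : P := (2^-1 : rat)%:MP; have h2 : h * 2 = 1 by rewrite -mpolyC_nat -rmorphM mulVf.
by rewrite -[e2]mul1r -h2 /e2 /rel1 /rel2; ring.
Qed.

Lemma sum_gmul_ell (es : seq ('I_m * GC m)) :
  \sum_j gmul (ell j) ([ffun j => \sum_(e <- es | e.1 == j) e.2] j) =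
  \sum_(e <- es) gmul (ell e.1) e.2.
Proof.
under eq_bigr => j _ do rewrite ffunE gmul_sumr.
rewrite (exchange_big_dep predT) //=; apply: eq_bigr => e _.
by rewrite (big_pred1 e.1) // => j; rewrite /= eq_sym.
Qed.

Lemma Keq_e2 (es : seq ('I_m * GC m)) u v a b :
  u - v = gmul (ev m rel1) a + gmul (ev m e2) b + \sum_(e <- es) gmul (ell e.1) e.2 ->
  Keq u v.
Proof.
move=> uv; pose h : P := (2^-1 : rat)%:MP.
exists (a + gmul (ev m (h * rel1)) b), (gmul (ev m (- h)) b), 0,
  [ffun j => \sum_(e <- es | e.1 == j) e.2].
rewrite uv sum_gmul_ell gmul0r addr0; congr (_ + _).
rewrite gmulDr -addrA; congr (_ + _); apply/ffunP => S.
by rewrite !gmul_evM !gmul_ev !ffunE -mulrDl e2_rel; congr (_ * _); ring.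
Qed.

Lemma ord_neq (i j : 'I_m) : (i < j)%N -> ((i == j) = false) * ((j == i) = false).
Proof. by move=> ij; split; [apply: ltn_eqF | apply: gtn_eqF]. Qed.

Section ThreeIndices.
Variables i0 i1 i2 : 'I_m.
Hypotheses (lt01 : (i0 < i1)%N) (lt12 : (i1 < i2)%N).
Let lt02 := ltn_trans lt01 lt12.
Let neq_i := (ord_neq lt01, ord_neq lt02, ord_neq lt12).
Let isgn_i := (isgn1_lt lt01, isgn1_lt lt02, isgn1_lt lt12,
               isgn1_gt lt01, isgn1_gt lt02, isgn1_gt lt12).
Local Notation I3 := [set i0; i1; i2].

(* When exactly the pair of colours [p = q] agrees and [s] differs, the relation is off by
   -t_p^d (t_p^2 + t_p t_s + t_s^2) = -t_p^d (e1 (t_p + t_s) - e2), writing t_c for [var c]. *)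
Definition pair_rel1 d (p q s : 'I_3) : P :=
  if (p == q) && (p != s) then - (var p ^+ d * (var p + var s)) else 0.
Definition pair_e2 d (p q s : 'I_3) : P :=
  if (p == q) && (p != s) then var p ^+ d else 0.

Lemma z_triple_rel d :
  Keq (z d.+3 I3 *+ 9)
    (gmul (z d.+2 [set i0; i1]) (z 2 [set i2])
     - gmul (z d.+2 [set i0; i2]) (z 2 [set i1])
     + gmul (z d.+2 [set i1; i2]) (z 2 [set i0])
     + gmul (z d.+1 [set i0; i1]) (z 3 [set i2])
     - gmul (z d.+1 [set i0; i2]) (z 3 [set i1])
     + gmul (z d.+1 [set i1; i2]) (z 3 [set i0])).
Proof.
pose A f := pair_rel1 d (f i0) (f i1) (f i2) + pair_rel1 d (f i0) (f i2) (f i1)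
            + pair_rel1 d (f i1) (f i2) (f i0).
pose B f := pair_e2 d (f i0) (f i1) (f i2) + pair_e2 d (f i0) (f i2) (f i1)
            + pair_e2 d (f i1) (f i2) (f i0).
apply: (@Keq_e2 [:: (i0, z d.+3 [set i1; i2]); (i1, - z d.+3 [set i0; i2]);
                    (i2, z d.+3 [set i0; i1])] _ _ (colored I3 A) (colored I3 B)).
rewrite !big_cons big_nil addr0 !gmulNr !z_colored !ell_colored !gmul_ev_colored.
rewrite !gmul_colored; try by rewrite ?disjoints1 1?disjoint_sym ?disjoints1 !inE ?neq_i.
have setU_I3 : ([set i0; i2] :|: [set i1] = I3) * ([set i1; i2] :|: [set i0] = I3)
    * ([set i1] :|: [set i0; i2] = I3) * ([set i2] :|: [set i0; i1] = I3)
    * ([set i0] :|: [set i1; i2] = I3).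
  by do !split; apply/setP => i; rewrite !inE;
    case: (i == i0); case: (i == i1); case: (i == i2).
rewrite !setU_I3 !isgnUl ?isgnUr; try by rewrite disjoints1 !inE ?neq_i.
rewrite !isgn_i !(coloredN, coloredMn, coloredD); apply: eq_colored => f _.
rewrite !zcoef_restrict /zcoef !sum_ord3 !agree_onU !agree_on1 !ffunE /A /B.
move: (f i0) (f i1) (f i2) => a b c.
by case: a => -[|[|[|//]]] ?; case: b => -[|[|[|//]]] ?; case: c => -[|[|[|//]]] ?;
  rewrite /pair_rel1 /pair_e2 /var /e2 /rel1 /= !exprS; ring.
Qed.

End ThreeIndices.

Section TwoIndices.
Variables i0 i1 : 'I_m.
Hypothesis lt01 : (i0 < i1)%N.
Local Notation I2 := [set i0; i1].

Lemma z_pair_rel d :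
  Keq (z d.+4 I2 *+ 3)
    (gmul (z d.+3 [set i0]) (z 2 [set i1]) + gmul (z d.+2 [set i0]) (z 3 [set i1])).
Proof.
(* Once -e3 z(d+1, {i0}) ell_i1 is removed, the relation is off by t_a^d (t_a^3 - e3) when
   i0 and i1 both have colour a, and by -e1 t_a^(d+1) t_b when their colours a, b differ. *)
pose A f := var (f i0) ^+ d.+1 * (if f i0 == f i1 then var (f i0) else - var (f i1)).
pose B f := if f i0 == f i1 then - var (f i0) ^+ d.+1 else 0.
apply: (@Keq_e2 [:: (i1, gmul (ev m (- e3)) (z d.+1 [set i0]))] _ _
                (colored I2 A) (colored I2 B)).
rewrite !big_cons big_nil addr0 !z_colored !ell_colored !gmul_ev_colored.
rewrite !gmul_colored; try by rewrite disjoints1 !inE (ord_neq lt01).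
have -> : [set i1] :|: [set i0] = I2 by rewrite setUC.
rewrite (isgn1_lt lt01) (isgn1_gt lt01) !(coloredN, coloredMn, coloredD).
apply: eq_colored => f _.
rewrite !zcoef_restrict /zcoef !sum_ord3 !agree_onU !agree_on1 !ffunE /A /B.
move: (f i0) (f i1) => a b.
by case: a => -[|[|[|//]]] ?; case: b => -[|[|[|//]]] ?;
  rewrite /var /e2 /e3 /rel1 /= !exprS; ring.
Qed.

End TwoIndices.

Lemma z_set0 k : z k (set0 : {set 'I_m}) = ev m (xv ^+ k.-1 + yv ^+ k.-1 + wv ^+ k.-1).
Proof.
rewrite /z /prodI enum_set0 /= !gmul_ev; apply/ffunP => S; rewrite !ffunE.
by case: ifP; rewrite ?mulr0 ?addr0 ?mulr1.
Qed.

Lemma z6_set0_rel : Keq (z 6 (set0 : {set 'I_m})) 0.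
Proof.
(* Newton: p5 = e1 p4 - e2 p3 + e3 p2 and p2 = e1^2 - 2 e2. *)
pose p4 : P := xv ^+ 4 + yv ^+ 4 + wv ^+ 4.
pose p3 : P := xv ^+ 3 + yv ^+ 3 + wv ^+ 3.
apply: (@Keq_e2 [::] _ _ (ev m (p4 + rel1 * e3)) (ev m (- (p3 + e3 *+ 2)))).
rewrite big_nil addr0 subr0 z_set0; apply/ffunP => S; rewrite !gmul_ev !ffunE.
by case: ifP => _; rewrite ?mulr0 ?addr0 // /p4 /p3 /rel1 /e2 /e3 /=; ring.
Qed.

End Kalgebra.

Lemma idx_nil m : idx m [::] = set0.
Proof. by apply/setP => i; rewrite !inE. Qed.

Lemma idx_cons m n s (n_lt_m : (n < m)%N) :
  idx m (n.+1 :: s) = Ordinal n_lt_m |: idx m s.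
Proof. by apply/setP => i; rewrite !inE eqSS. Qed.

Theorem lemma6p3 (m : nat) :
  ((3 <= m)%N ->
     Keq (z 3 (idx m [:: 1; 2; 3]%N) *+ 9)
       (gmul (z 2 (idx m [:: 1; 2]%N)) (z 2 (idx m [:: 3]%N))
        - gmul (z 2 (idx m [:: 1; 3]%N)) (z 2 (idx m [:: 2]%N))
        + gmul (z 2 (idx m [:: 2; 3]%N)) (z 2 (idx m [:: 1]%N))
        + gmul (z 1 (idx m [:: 1; 2]%N)) (z 3 (idx m [:: 3]%N))
        - gmul (z 1 (idx m [:: 1; 3]%N)) (z 3 (idx m [:: 2]%N))
        + gmul (z 1 (idx m [:: 2; 3]%N)) (z 3 (idx m [:: 1]%N)))
   /\
     Keq (z 5 (idx m [:: 1; 2; 3]%N) *+ 9)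
       (gmul (z 4 (idx m [:: 1; 2]%N)) (z 2 (idx m [:: 3]%N))
        - gmul (z 4 (idx m [:: 1; 3]%N)) (z 2 (idx m [:: 2]%N))
        + gmul (z 4 (idx m [:: 2; 3]%N)) (z 2 (idx m [:: 1]%N))
        + gmul (z 3 (idx m [:: 1; 2]%N)) (z 3 (idx m [:: 3]%N))
        - gmul (z 3 (idx m [:: 1; 3]%N)) (z 3 (idx m [:: 2]%N))
        + gmul (z 3 (idx m [:: 2; 3]%N)) (z 3 (idx m [:: 1]%N))))
  /\
  ((2 <= m)%N ->
     Keq (z 4 (idx m [:: 1; 2]%N) *+ 3)
       (gmul (z 3 (idx m [:: 1]%N)) (z 2 (idx m [:: 2]%N))
        + gmul (z 2 (idx m [:: 1]%N)) (z 3 (idx m [:: 2]%N)))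
   /\
     Keq (z 6 (idx m [:: 1; 2]%N) *+ 3)
       (gmul (z 5 (idx m [:: 1]%N)) (z 2 (idx m [:: 2]%N))
        + gmul (z 4 (idx m [:: 1]%N)) (z 3 (idx m [:: 2]%N))))
  /\
  Keq (z 6 (set0 : {set 'I_m})) 0.
Proof.
split; [move=> lt2 | split; [move=> lt1 | exact: z6_set0_rel]].
  have lt1 := ltnW lt2; have lt0 := ltnW lt1.
  rewrite !(idx_cons _ lt0) !(idx_cons _ lt1) !(idx_cons _ lt2) idx_nil !setU0 setUA.
  by split; apply: (@z_triple_rel _ (Ordinal lt0) (Ordinal lt1) (Ordinal lt2)).
have lt0 := ltnW lt1.
rewrite !(idx_cons _ lt0) !(idx_cons _ lt1) idx_nil !setU0.
by split; apply: (@z_pair_rel _ (Ordinal lt0) (Ordinal lt1)).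
Qed.
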